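(* Let $P,F,A_I,A_O,B_I,B_O$ be finite-dimensional Hilbert spaces with $A_I\cong A_O$, $B_I\cong B_O$, $P\cong F$ (identified via their computational bases), and let $|w\rangle\in P\otimes A_I\otimes A_O\otimes B_I\otimes B_O\otimes F$ be such that $|w\rangle\langle w|$ is a pure process. Define $$|w_r\rangle:=(\mathrm{SWAP}_{PF}\otimes\mathrm{SWAP}_{A_IA_O}\otimes\mathrm{SWAP}_{B_IB_O})\,|w^*\rangle,$$ where $|w^*\rangle$ is the entrywise complex conjugate of $|w\rangle$ in the computational basis and $\mathrm{SWAP}_{XY}$ exchanges the isomorphic factors $X$ and $Y$. Then $|w_r\rangle\langle w_r|$ is a valid pure process.
   Context: All Hilbert spaces are finite-dimensional with fixed computational bases; juxtaposition denotes tensor product. For a linear map $K:X\to Y$, $|K\rangle\!\rangle^{XY}=\sum_i|i\rangle^X\otimes(K|i\rangle)^Y$. For an operator $W$ on $X\otimes Y$, $W^{T_X}$ is its partial transpose on $X$. The Choi operator of $\mathcal{M}:\mathcal{L}(X)\to\mathcal{L}(Y)$ is $\sum_{ij}|i\rangle\langle j|\otimes\mathcal{M}(|i\rangle\langle j|)$. A process matrix is an operator $W$ on $PFA_IA_OB_IB_O$ such that for all finite-dimensional ancilla spaces $A_I',A_O',B_I',B_O'$ and all CPTP maps $\mathcal{M}_x:\mathcal{L}(A_IA_I')\to\mathcal{L}(A_OA_O')$, $\mathcal{M}_y:\mathcal{L}(B_IB_I')\to\mathcal{L}(B_OB_O')$ with Choi operators $M_x,M_y$, the operator $\mathrm{tr}_{A_IA_OB_IB_O}\big(W^{T_{A_IA_OB_IB_O}}(M_x\otimes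 M_y)\big)$ is the Choi operator of a CPTP map from $PA_I'B_I'$ to $FA_O'B_O'$. It is pure if for all ancilla spaces with $d_{A_I}d_{A_I'}=d_{A_O}d_{A_O'}$, $d_{B_I}d_{B_I'}=d_{B_O}d_{B_O'}$, $d_Pd_{A_I'}d_{B_I'}=d_Fd_{A_O'}d_{B_O'}$ and all unitaries $U:A_IA_I'\to A_OA_O'$, $V:B_IB_I'\to B_OB_O'$, the operator $\mathrm{tr}_{A_IA_OB_IB_O}\big(W^{T_{A_IA_OB_IB_O}}(|U\rangle\!\rangle\langle\!\langle U|\otimes|V\rangle\!\rangle\langle\!\langle V|)\big)$ is the Choi operator of a unitary channel from $PA_I'B_I'$ to $FA_O'B_O'$. *)

From HB Require Import structures.
From mathcomp Require Import all_boot all_order all_algebra.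
From mathcomp Require Import complex.
From mathcomp Require Import Rstruct.
From Stdlib Require Rdefinitions.
Set Implicit Arguments. Unset Strict Implicit. Unset Printing Implicit Defensive.
Import Order.TTheory GRing.Theory Num.Theory.
Local Open Scope ring_scope.

Definition CC : numClosedFieldType := complex Rdefinitions.R.

Section QuantumDefs.
Variable C : numClosedFieldType.

(* A finite-dimensional Hilbert space is given by (the finType indexing) its
   computational basis; the tensor product X (x) Y has basis X * Y. *)
Definition ket (X : finType) := X -> C.
Arguments ket X%_type.
Definition op (X : finType) := X -> X -> C.
Arguments op X%_type.
(* a linear map X -> Y, as its matrix (row index in Y, column index in X) *)
Definition lmap (X Y : finType) := Y -> X -> C.
Arguments lmap X%_type Y%_type.

Definition adj (X Y : finType) (K : lmap X Y) : lmap Y X := fun x y => (K y x)^*.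
Definition lcomp (X Y Z : finType) (K : lmap Y Z) (L : lmap X Y) : lmap X Z :=
  fun z x => \sum_(y : Y) K z y * L y x.
Definition idop (X : finType) : op X := fun x x' => (x == x')%:R.
Arguments idop X%_type.

Definition unitary (X Y : finType) (U : lmap X Y) : Prop :=
  lcomp (adj U) U = idop (X:=X) /\ lcomp U (adj U) = idop (X:=Y).

Definition proj (X : finType) (psi : ket X) : op X := fun x x' => psi x * (psi x')^*.

(* |K>> = sum_i |i>^X (x) (K|i>)^Y *)
Definition dket (X Y : finType) (K : lmap X Y) : ket (X * Y) := fun xy => K xy.2 xy.1.

Definition trace (X : finType) (A : op X) : C := \sum_(x : X) A x x.

Definition psd (X : finType) (A : op X) : Prop :=
  forall v : ket X, 0 <= \sum_(x : X) \sum_(x' : X) (v x)^* * A x x' * v x'.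

Definition supmap (X Y : finType) := op X -> op Y.
Arguments supmap X%_type Y%_type.

Definition linear_supmap (X Y : finType) (M : supmap X Y) : Prop :=
  forall (a : C) (r s : op X),
    M (fun x x' => a * r x x' + s x x') = (fun y y' => a * M r y y' + M s y y').

(* id_Z (x) M applied to an operator on Z (x) X *)
Definition ampl (Z X Y : finType) (M : supmap X Y) (rho : op (Z * X)) : op (Z * Y) :=
  fun zy zy' => M (fun x x' => rho (zy.1, x) (zy'.1, x')) zy.2 zy'.2.

Definition completely_positive (X Y : finType) (M : supmap X Y) : Prop :=
  forall (Z : finType) (rho : op (Z * X)), psd rho -> psd (ampl M rho).

Definition trace_preserving (X Y : finType) (M : supmap X Y) : Prop :=
  forall rho : op X, trace (M rho) = trace rho.

Definition CPTP (X Y : finType) (M : supmap X Y) : Prop :=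
  [/\ linear_supmap M, completely_positive M & trace_preserving M].

Definition munit (X : finType) (i j : X) : op X :=
  fun x x' => ((x == i) && (x' == j))%:R.

Definition choi (X Y : finType) (M : supmap X Y) : op (X * Y) :=
  fun xy xy' => M (munit xy.1 xy'.1) xy.2 xy'.2.

Definition unitary_channel (X Y : finType) (U : lmap X Y) : supmap X Y :=
  fun rho => lcomp (lcomp U rho) (adj U).

Definition opmul (X : finType) (A B : op X) : op X := lcomp A B.
Definition tens (X Y : finType) (A : op X) (B : op Y) : op (X * Y) :=
  fun i j => A i.1 j.1 * B i.2 j.2.
Definition ptrace2 (X Y : finType) (A : op (X * Y)) : op X :=
  fun i j => \sum_(y : Y) A (i, y) (j, y).
Definition ptransp2 (X Y : finType) (A : op (X * Y)) : op (X * Y) :=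
  fun i j => A (i.1, j.2) (j.1, i.2).
(* reordering of tensor factors: f is the (bijective) relabelling of basis
   elements from the new ordering Y to the old ordering X *)
Definition relabel (X Y : finType) (f : Y -> X) (A : op X) : op Y :=
  fun i j => A (f i) (f j).

Section Link.
Variables (P F AI AO BI BO AI' AO' BI' BO' : finType).

(* tr_{AI AO BI BO}( W^{T_{AI AO BI BO}} (Mx (x) My) ), where W is an operator on
   P F AI AO BI BO, Mx on (AI AI')(AO AO'), My on (BI BI')(BO BO'); the result
   is an operator on (P AI' BI') (F AO' BO'). *)
Definition link_op (W : op (P * F * AI * AO * BI * BO))
    (Mx : op ((AI * AI') * (AO * AO'))) (My : op ((BI * BI') * (BO * BO')))
  : op ((P * AI' * BI') * (F * AO' * BO')) :=
  let W1 : op ((P * F) * (AI * AO * BI * BO)) :=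
    relabel (fun u : (P * F) * (AI * AO * BI * BO) =>
               let: ((p, f), (ai, ao, bi, bo)) := u in (p, f, ai, ao, bi, bo)) W in
  (* W^{T_S} (x) 1 on ((P F) S) T, with T = AI' AO' BI' BO' *)
  let L : op (((P * F) * (AI * AO * BI * BO)) * (AI' * AO' * BI' * BO')) :=
    tens (ptransp2 W1) (idop (X:=(AI' * AO' * BI' * BO'))) in
  (* 1_{PF} (x) Mx (x) My on ((P F) S) T *)
  let R : op (((P * F) * (AI * AO * BI * BO)) * (AI' * AO' * BI' * BO')) :=
    relabel (fun u : ((P * F) * (AI * AO * BI * BO)) * (AI' * AO' * BI' * BO') =>
               let: ((pf, (ai, ao, bi, bo)), (ai', ao', bi', bo')) := u in
               (pf, (((ai, ai'), (ao, ao')), ((bi, bi'), (bo, bo')))))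
      (tens (idop (X:=P * F)) (tens Mx My)) in
  let Prod := opmul L R in
  let Prod' : op (((P * F) * (AI' * AO' * BI' * BO')) * (AI * AO * BI * BO)) :=
    relabel (fun u : ((P * F) * (AI' * AO' * BI' * BO')) * (AI * AO * BI * BO) =>
               let: ((pf, t), s) := u in ((pf, s), t)) Prod in
  let T := ptrace2 Prod' in
  relabel (fun u : (P * AI' * BI') * (F * AO' * BO') =>
             let: ((p, ai', bi'), (f, ao', bo')) := u in
             ((p, f), (ai', ao', bi', bo'))) T.

End Link.

Definition process_matrix (P F AI AO BI BO : finType)
    (W : op (P * F * AI * AO * BI * BO)) : Prop :=
  forall (AI' AO' BI' BO' : finType)
         (Mxm : supmap (AI * AI') (AO * AO')) (Mym : supmap (BI * BI') (BO * BO')),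
    CPTP Mxm -> CPTP Mym ->
    exists N : supmap (P * AI' * BI') (F * AO' * BO'),
      CPTP N /\ choi N = link_op W (choi Mxm) (choi Mym).

Definition pure_process (P F AI AO BI BO : finType)
    (W : op (P * F * AI * AO * BI * BO)) : Prop :=
  forall (AI' AO' BI' BO' : finType)
         (U : lmap (AI * AI') (AO * AO')) (V : lmap (BI * BI') (BO * BO')),
    (#|AI| * #|AI'| = #|AO| * #|AO'|)%N ->
    (#|BI| * #|BI'| = #|BO| * #|BO'|)%N ->
    (#|P| * #|AI'| * #|BI'| = #|F| * #|AO'| * #|BO'|)%N ->
    unitary U -> unitary V ->
    exists Y : lmap (P * AI' * BI') (F * AO' * BO'),
      unitary Y /\
      choi (unitary_channel Y) = link_op W (proj (dket U)) (proj (dket V)).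

End QuantumDefs.

Arguments ket C X%_type.
Arguments op C X%_type.
Arguments lmap C X%_type Y%_type.
Arguments supmap C X%_type Y%_type.

Definition reverse_ket (C : numClosedFieldType) (P A B : finType)
    (w : ket C (P * P * A * A * B * B)) : ket C (P * P * A * A * B * B) :=
  fun u => let: (p, f, ai, ao, bi, bo) := u in (w (f, p, ao, ai, bo, bi))^*.

(* Reversal commutes with the link product up to conjugation: the link of the
   reversed ket with unitaries [U], [V] is the complex conjugate, with inputs and
   outputs exchanged, of the link of [w] with the adjoints of [U], [V]. So if the
   latter is the Choi operator of a unitary [Y], the former is that of the adjoint
   of [Y], and the reversed process is pure.

   A pure process is a process matrix. Its link with positive operators is a sum
   of rank-one operators, hence positive. Its partial trace over the future only
   depends on the partial traces of the Choi operators over their output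
   ancillas, which are those of unitary (Stinespring) dilations of the channels;
   purity makes it the partial trace of the Choi operator of a unitary channel,
   i.e. the identity. *)

From mathcomp Require Import all_boot all_order all_algebra.
From mathcomp Require Import ring.
From Stdlib Require Import FunctionalExtensionality.
Set Implicit Arguments. Unset Strict Implicit. Unset Printing Implicit Defensive.
Import Order.TTheory GRing.Theory Num.Theory.
Local Open Scope ring_scope.

Lemma funext2 (T U V : Type) (f g : T -> U -> V) :
  (forall x y, f x y = g x y) -> f = g.
Proof.
by move=> fg; apply: functional_extensionality => x; apply: functional_extensionality.
Qed.

Section Sums.
Variable C : numClosedFieldType.

Lemma sum_pair (X Y : finType) (G : X * Y -> C) :
  \sum_(z : X * Y) G z = \sum_(x : X) \sum_(y : Y) G (x, y).
Proof. by rewrite pair_bigA; apply: eq_bigr => -[]. Qed.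

Lemma sum_delta_l (X : finType) (a : X) (G : X -> C) :
  \sum_x (x == a)%:R * G x = G a.
Proof.
under eq_bigr => x _ do rewrite mulr_natl mulrb.
by rewrite -big_mkcond big_pred1_eq.
Qed.

Lemma sum_delta_r (X : finType) (a : X) (G : X -> C) :
  \sum_x G x * (x == a)%:R = G a.
Proof. by rewrite -[RHS](sum_delta_l a); apply: eq_bigr => x _; rewrite mulrC. Qed.

Lemma natr_andb (a b : bool) : (a && b)%:R = a%:R * b%:R :> C.
Proof. by rewrite -natrM mulnb. Qed.

End Sums.

Section Positivity.
Variable C : numClosedFieldType.
Implicit Types X Y I J K L : finType.

Definition qform X (A : op C X) (v : ket C X) : C :=
  \sum_x \sum_x' (v x)^* * A x x' * v x'.

Definition opsum X I (A : I -> op C X) : op C X := fun x x' => \sum_i A i x x'.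

Lemma psd_proj X (u : ket C X) : psd (proj u).
Proof.
move=> v; rewrite -/(qform _ _).
have -> : qform (proj u) v = (\sum_x (v x)^* * u x) * (\sum_x (v x)^* * u x)^*.
  rewrite rmorph_sum big_distrl /=; apply: eq_bigr => x _.
  rewrite big_distrr /=; apply: eq_bigr => x' _.
  by rewrite /proj rmorphM /= conjCK; ring.
exact: mul_conjC_ge0.
Qed.

Lemma psd_opsum X I (A : I -> op C X) : (forall i, psd (A i)) -> psd (opsum A).
Proof.
move=> psdA v; rewrite -/(qform _ _).
have -> : qform (opsum A) v = \sum_i qform (A i) v.
  rewrite /qform /opsum.
  under eq_bigr => x _ do under eq_bigr => x' _ do rewrite big_distrr big_distrl /=.
  under eq_bigr => x _ do rewrite exchange_big /=.
  by rewrite exchange_big.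
by apply: sumr_ge0 => i _; apply: psdA.
Qed.

Lemma sum_mul_sum I J (a : I -> C) (b : J -> C) c :
  (\sum_i a i) * c * (\sum_j b j) = \sum_i \sum_j a i * c * b j.
Proof. by rewrite !big_distrl /=; apply: eq_bigr => i _; rewrite big_distrr. Qed.

Lemma exchange_big4 I J K L (f : I -> J -> K -> L -> C) :
  \sum_i \sum_j \sum_k \sum_l f i j k l = \sum_k \sum_l \sum_i \sum_j f i j k l.
Proof.
have sum_pair2 I' J' K' L' (g : I' -> J' -> K' -> L' -> C) :
    \sum_i \sum_j \sum_k \sum_l g i j k l =
    \sum_(ij : I' * J') \sum_(kl : K' * L') g ij.1 ij.2 kl.1 kl.2.
  by rewrite sum_pair; apply: eq_bigr => i _; apply: eq_bigr => j _; rewrite sum_pair.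
by rewrite !sum_pair2 exchange_big.
Qed.

Lemma psd_congr X Y (L : X -> Y -> C) (A : op C X) :
  psd A -> psd (fun y y' => \sum_x \sum_x' (L x y)^* * A x x' * L x' y').
Proof.
move=> psdA v; have := psdA (fun x => \sum_y L x y * v y).
congr (_ <= _).
under eq_bigr => x _ do under eq_bigr => x' _ do rewrite rmorph_sum sum_mul_sum /=.
under [RHS]eq_bigr => y _ do under eq_bigr => y' _ do
  rewrite big_distrr big_distrl /=.
rewrite exchange_big4; apply: eq_bigr => y _; apply: eq_bigr => y' _.
apply: eq_bigr => x _; rewrite big_distrr big_distrl.
by apply: eq_bigr => x' _; rewrite rmorphM /=; ring.
Qed.

Lemma qform_pair X (A : op C X) x y c :
  qform A (fun z => (z == x)%:R + c * (z == y)%:R) =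
  A x x + A x y * c + c^* * A y x + c^* * A y y * c.
Proof.
have expand z z' : ((z == x)%:R + c * (z == y)%:R)^* * A z z' *
    ((z' == x)%:R + c * (z' == y)%:R) =
  (z == x)%:R * (A z z' * ((z' == x)%:R + c * (z' == y)%:R)) +
  (z == y)%:R * (c^* * (A z z' * ((z' == x)%:R + c * (z' == y)%:R))).
  by rewrite rmorphD rmorphM /= !conjC_nat; ring.
rewrite /qform; under eq_bigr => z _ do under eq_bigr => z' _ do rewrite expand.
rewrite exchange_big /=.
under eq_bigr => z' _ do rewrite big_split /= !sum_delta_l.
have regroup z' : A x z' * ((z' == x)%:R + c * (z' == y)%:R) +
    c^* * (A y z' * ((z' == x)%:R + c * (z' == y)%:R)) =
  (z' == x)%:R * (A x z' + c^* * A y z') +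
  (z' == y)%:R * (A x z' * c + c^* * A y z' * c).
  by ring.
under eq_bigr => z' _ do rewrite regroup.
by rewrite big_split /= !sum_delta_l; ring.
Qed.

Lemma psd_hermitian X (A : op C X) : psd A -> forall x y, A y x = (A x y)^*.
Proof.
move=> psdA x y.
have qform_real z z' c : qform A (fun t => (t == z)%:R + c * (t == z')%:R) \is Num.real.
  exact/ger0_real/psdA.
have diag_real z : A z z \is Num.real.
  by have := qform_real z z 0; rewrite qform_pair !(mulr0, rmorph0, mul0r, addr0).
have /CrealP := qform_real x y 1; have /CrealP := qform_real x y 'i.
rewrite !qform_pair !rmorphD !rmorphM /= !rmorph1 !conjCK conjCi !mulr1 !mul1r.
rewrite (CrealP (diag_real x)) (CrealP (diag_real y)).
set a := A x y; set b := A y x.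
move=> /eqP; rewrite -subr_eq0 => /eqP Ei /eqP; rewrite -subr_eq0 => /eqP E1.
set ei := (X in X = 0) in Ei; set e1 := (X in X = 0) in E1.
have : 'i * ((b^* - a) *+ 2) = 'i * e1 + ei by rewrite /e1 /ei; ring.
rewrite E1 Ei mulr0 addr0 => /eqP.
by rewrite mulf_eq0 (negbTE (neq0Ci _)) mulrn_eq0 subr_eq0 => /eqP <-; rewrite conjCK.
Qed.

Lemma sum_enum X (G : X -> C) : \sum_(x : X) G x = \sum_(i < #|X|) G (enum_val i).
Proof.
rewrite (reindex (@enum_val X X)) //.
by exists (@enum_rank X) => i _; [apply: enum_valK | apply: enum_rankK].
Qed.

Lemma psd_spectral X (A : op C X) :
  psd A -> exists v : 'I_#|X| -> ket C X, A = opsum (fun k => proj (v k)).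
Proof.
move=> psdA.
pose Am : 'M[C]_#|X| := \matrix_(i, j) A (enum_val i) (enum_val j).
have Am_normal : Am \is normalmx.
  have Am_herm : (Am ^t*)%sesqui = Am.
    by apply/matrixP => i j; rewrite !mxE -(psd_hermitian psdA).
  by apply/normalmxP; rewrite Am_herm.
have /orthomx_spectralP := Am_normal.
set Q := spectralmx Am; set d := spectral_diag Am => AmE.
have Q_unitary : Q \is unitarymx by apply: spectral_unitarymx.
rewrite invmx_unitary // in AmE.
have d_ge0 k : 0 <= d 0 k.
  have diagE : Q *m Am *m (Q ^t*)%sesqui = diag_mx d.
    by rewrite AmE !mulmxA (unitarymxP Q_unitary) mul1mx -!mulmxA
      (unitarymxP Q_unitary) mulmx1.
  have := psdA (fun t => (Q k (enum_rank t))^*).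
  have -> : \sum_x \sum_x' ((Q k (enum_rank x))^*)^* * A x x' * (Q k (enum_rank x'))^*
      = (Q *m Am *m (Q ^t*)%sesqui) k k.
    rewrite exchange_big mxE sum_enum; apply: eq_bigr => i _.
    rewrite mxE big_distrl sum_enum /=; apply: eq_bigr => j _.
    by rewrite !mxE !enum_valK conjCK.
  by rewrite diagE mxE eqxx mulr1n.
exists (fun k t => sqrtC (d 0 k) * (Q k (enum_rank t))^*).
apply: funext2 => x x'.
have -> : A x x' = Am (enum_rank x) (enum_rank x') by rewrite mxE !enum_rankK.
rewrite AmE mul_mx_diag !mxE; apply: eq_bigr => k _.
have sqrt_real : (sqrtC (d 0 k))^* = sqrtC (d 0 k).
  by apply/conj_Creal/ger0_real; rewrite sqrtC_ge0.
have sqrt_sqr : sqrtC (d 0 k) * sqrtC (d 0 k) = d 0 k by rewrite -expr2 sqrtCK.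
rewrite /proj !mxE rmorphM /= conjCK sqrt_real.
by move: (sqrtC (d 0 k)) sqrt_sqr => s <-; ring.
Qed.

End Positivity.

Section ChoiMap.
Variable C : numClosedFieldType.
Implicit Types X Y Z I : finType.

Lemma trace_munit X (x x' : X) : trace (munit C x x') = (x == x')%:R.
Proof.
rewrite /trace /munit; under eq_bigr => z _ do rewrite natr_andb.
by rewrite sum_delta_l eq_sym.
Qed.

Lemma choi_psd X Y (M : supmap C X Y) : completely_positive M -> psd (choi M).
Proof.
pose omega : ket C (X * X) := fun u => (u.1 == u.2)%:R.
have -> : choi M = ampl M (proj omega).
  apply: funext2 => -[x y] [x' y'].
  rewrite /ampl /choi /=; congr (M _ y y').
  apply: funext2 => z z'.
  by rewrite /proj /omega /munit /= conjC_nat natr_andb eq_sym (eq_sym z').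
by move=> cpM; apply/cpM/psd_proj.
Qed.

Definition choi_map X Y (J : op C (X * Y)) : supmap C X Y :=
  fun rho y y' => \sum_x \sum_x' rho x x' * J (x, y) (x', y').

Lemma choi_mapK X Y (J : op C (X * Y)) : choi (choi_map J) = J.
Proof.
apply: funext2 => -[x y] [x' y'].
rewrite /choi /choi_map /munit /=.
transitivity (\sum_z (z == x)%:R * \sum_z' (z' == x')%:R * J (z, y) (z', y')).
  apply: eq_bigr => z _; rewrite big_distrr /=.
  by apply: eq_bigr => z' _; rewrite natr_andb; ring.
by rewrite sum_delta_l sum_delta_l.
Qed.

Lemma linear_choi_map X Y (J : op C (X * Y)) : linear_supmap (choi_map J).
Proof.
move=> a r s; apply: funext2 => y y'.
rewrite /choi_map big_distrr -big_split; apply: eq_bigr => x _ /=.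
by rewrite big_distrr -big_split; apply: eq_bigr => x' _ /=; ring.
Qed.

Lemma sum_pair_delta Z X (z : Z) (G : Z * X -> C) :
  \sum_(a : Z * X) (a.1 == z)%:R * G a = \sum_x G (z, x).
Proof.
rewrite sum_pair /=; under eq_bigr => z' _ do rewrite -big_distrr /=.
by rewrite sum_delta_l.
Qed.

(* The amplification of [choi_map J] is a sum of congruences by the vectors of a
   spectral decomposition of [J]. *)
Lemma cp_choi_map X Y (J : op C (X * Y)) : psd J -> completely_positive (choi_map J).
Proof.
move=> /psd_spectral[v ->] Z rho psd_rho.
pose L k (a : Z * X) (u : Z * Y) := (a.1 == u.1)%:R * (v k (a.2, u.2))^*.
suff -> : ampl (choi_map (opsum (fun k => proj (v k)))) rho =
    opsum (fun k u u' => \sum_a \sum_a' (L k a u)^* * rho a a' * L k a' u').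
  by apply: psd_opsum => k; apply: psd_congr.
apply: funext2 => -[z y] [z' y'].
rewrite /ampl /choi_map /opsum /=.
have congrE k : \sum_a \sum_a' (L k a (z, y))^* * rho a a' * L k a' (z', y') =
    \sum_x \sum_x' v k (x, y) * rho (z, x) (z', x') * (v k (x', y'))^*.
  transitivity (\sum_(a : Z * X) (a.1 == z)%:R * (\sum_(a' : Z * X) (a'.1 == z')%:R *
      (v k (a.2, y) * rho a a' * (v k (a'.2, y'))^*))).
    apply: eq_bigr => a _; rewrite big_distrr /=; apply: eq_bigr => a' _.
    by rewrite /L /= rmorphM /= conjC_nat conjCK; ring.
  by rewrite sum_pair_delta; apply: eq_bigr => x _; rewrite sum_pair_delta.
under [RHS]eq_bigr => k _ do rewrite congrE.
rewrite [RHS]exchange_big; apply: eq_bigr => x _ /=.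
rewrite [RHS]exchange_big; apply: eq_bigr => x' _ /=.
by rewrite big_distrr /=; apply: eq_bigr => k _; rewrite /proj; ring.
Qed.

Lemma tp_choi_map X Y (J : op C (X * Y)) :
  (forall x x', \sum_y J (x, y) (x', y) = (x == x')%:R) ->
  trace_preserving (choi_map J).
Proof.
move=> ptrJ rho; rewrite /trace /choi_map exchange_big; apply: eq_bigr => x _ /=.
rewrite exchange_big; under eq_bigr => x' _ do rewrite -big_distrr /= ptrJ.
by under eq_bigr => x' _ do rewrite eq_sym; rewrite sum_delta_r.
Qed.

Definition isometry X Y (K : lmap C X Y) : Prop := lcomp (adj K) K = @idop C X.

Definition kraus_op X Y I (v : I -> ket C (X * Y)) : lmap C X (Y * I) :=
  fun yk x => v yk.2 (x, yk.1).

Lemma choi_kraus X Y (M : supmap C X Y) : CPTP M ->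
  exists v : 'I_#|{: X * Y}| -> ket C (X * Y),
    choi M = opsum (fun k => proj (v k)) /\ isometry (kraus_op v).
Proof.
case=> _ cpM tpM; have [v choiE] := psd_spectral (choi_psd cpM).
exists v; split => //.
apply: funext2 => x x'.
transitivity (\sum_y choi M (x', y) (x, y)).
  rewrite /lcomp /adj /kraus_op sum_pair; apply: eq_bigr => y _.
  by rewrite choiE; apply: eq_bigr => k _; rewrite /proj mulrC.
by rewrite /choi /= -/(trace _) tpM trace_munit eq_sym.
Qed.

End ChoiMap.

Section UnitaryCompletion.
Variables (C : numClosedFieldType) (X Y : finType) (K : lmap C X Y).
Hypothesis K_iso : isometry K.

Let K_isoE x x' : \sum_y (K y x)^* * K y x' = (x' == x)%:R.
Proof. by rewrite eq_sym; apply: (equal_f (equal_f K_iso x) x'). Qed.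

Definition compl_proj : op C Y := fun y y' => (y == y')%:R - \sum_x K y x * (K y' x)^*.

Lemma adj_mul_compl x y' : \sum_y (K y x)^* * compl_proj y y' = 0.
Proof.
under eq_bigr => y _ do rewrite mulrBr big_distrr /=.
rewrite sumrB sum_delta_r exchange_big /=.
under eq_bigr => x' _ do under eq_bigr => y _ do rewrite mulrA.
under eq_bigr => x' _ do rewrite -big_distrl /= K_isoE.
by rewrite sum_delta_l subrr.
Qed.

Lemma compl_mul y x : \sum_y' compl_proj y y' * K y' x = 0.
Proof.
under eq_bigr => y' _ do rewrite mulrBl big_distrl /=.
under eq_bigr => y' _ do rewrite eq_sym.
rewrite sumrB sum_delta_l exchange_big /=.
under eq_bigr => x' _ do under eq_bigr => y' _ do rewrite -mulrA.
under eq_bigr => x' _ do rewrite -big_distrr /= K_isoE.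
by under eq_bigr => x' _ do rewrite eq_sym; rewrite sum_delta_r subrr.
Qed.

Lemma conj_compl y y' : (compl_proj y y')^* = compl_proj y' y.
Proof.
rewrite /compl_proj rmorphB /= conjC_nat rmorph_sum eq_sym; congr (_ - _).
by apply: eq_bigr => x _; rewrite rmorphM /= conjCK mulrC.
Qed.

Lemma compl_idem y y'' : \sum_y' compl_proj y y' * compl_proj y' y'' = compl_proj y y''.
Proof.
rewrite {2}/compl_proj.
under eq_bigr => y' _ do rewrite mulrBr big_distrr /=.
rewrite sumrB sum_delta_r exchange_big /=.
under eq_bigr => x _ do under eq_bigr => y' _ do rewrite mulrA.
under eq_bigr => x _ do rewrite -big_distrl /= compl_mul.
by rewrite big1 ?subr0 // => x _; rewrite mul0r.
Qed.

Definition unitary_completion : lmap C (X + Y) (Y + X) := fun o i =>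
  match o, i with
  | inl y, inl x => K y x
  | inl y, inr y' => compl_proj y y'
  | inr _, inl _ => 0
  | inr x', inr y' => - (K y' x')^*
  end.

Lemma unitary_completion_unitary : unitary unitary_completion.
Proof.
split; apply: funext2 => i i';
  rewrite /lcomp /adj /idop big_sumType /=.
- case: i => [x|y]; case: i' => [x'|y'] /=.
  + by rewrite K_isoE eq_sym big1 ?addr0 // => x'' _; rewrite mulr0.
  + by rewrite adj_mul_compl big1 ?addr0 // => x'' _; rewrite rmorph0 mul0r.
  + rewrite [X in _ + X]big1 ?addr0; last by move=> x'' _; rewrite mulr0.
    by rewrite -[RHS](compl_mul y x'); apply: eq_bigr => y'' _; rewrite conj_compl.
  + under eq_bigr => y'' _ do rewrite conj_compl.
    under [X in _ + X]eq_bigr => x'' _ do rewrite rmorphN /= conjCK mulrNN.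
    by rewrite compl_idem /compl_proj subrK.
- case: i => [y|x]; case: i' => [y'|x'] /=.
  + under [X in _ + X]eq_bigr => y'' _ do rewrite conj_compl.
    by rewrite compl_idem /compl_proj addrC subrK.
  + rewrite big1 ?add0r; last by move=> x'' _; rewrite rmorph0 mulr0.
    under eq_bigr => y'' _ do rewrite rmorphN /= conjCK mulrN.
    by rewrite sumrN compl_mul oppr0.
  + rewrite big1 ?add0r; last by move=> x'' _; rewrite mul0r.
    under eq_bigr => y'' _ do rewrite conj_compl mulNr.
    by rewrite sumrN adj_mul_compl oppr0.
  + rewrite big1 ?add0r; last by move=> x'' _; rewrite mul0r.
    under eq_bigr => y'' _ do rewrite rmorphN /= conjCK mulrNN.
    by rewrite K_isoE eq_sym.
Qed.

End UnitaryCompletion.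

Section Dilation.
Variable C : numClosedFieldType.

Lemma unitary_relabel (X Y X' Y' : finType) (U : lmap C X Y) (f : X' -> X) (g : Y' -> Y) :
  bijective f -> bijective g -> unitary U -> unitary (fun y x => U (g y) (f x)).
Proof.
move=> bij_f bij_g [UU UU']; split.
- apply: funext2 => x x'.
  have := equal_f (equal_f UU (f x)) (f x').
  rewrite /lcomp /adj /idop (reindex g) /=; last exact: onW_bij.
  by move=> ->; rewrite (inj_eq (bij_inj bij_f)).
- apply: funext2 => y y'.
  have := equal_f (equal_f UU' (g y)) (g y').
  rewrite /lcomp /adj /idop (reindex f) /=; last exact: onW_bij.
  by move=> ->; rewrite (inj_eq (bij_inj bij_g)).
Qed.

Variables (S I O N : finType).

Definition dilation_in (u : S * (I + O * N)) : (S * I) + ((S * O) * N) :=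
  match u with (s, inl i) => inl (s, i) | (s, inr (o, n)) => inr ((s, o), n) end.

Definition dilation_out (u : S * (O * N + I)) : ((S * O) * N) + (S * I) :=
  match u with (s, inl (o, n)) => inl ((s, o), n) | (s, inr i) => inr (s, i) end.

Lemma dilation_in_bij : bijective dilation_in.
Proof.
exists (fun u => match u with
                 | inl (s, i) => (s, inl i) | inr ((s, o), n) => (s, inr (o, n)) end).
  by case=> s [i|[o n]].
by case=> [[s i]|[[s o] n]].
Qed.

Lemma dilation_out_bij : bijective dilation_out.
Proof.
exists (fun u => match u with
                 | inl ((s, o), n) => (s, inl (o, n)) | inr (s, i) => (s, inr i) end).
  by case=> s [[o n]|i].
by case=> [[[s o] n]|[s i]].
Qed.

(* Input ancilla [I + O * N] and output ancilla [O * N + I] have the same size, as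
   [pure_process] requires. *)
Definition dilation (K : lmap C (S * I) ((S * O) * N)) :
    lmap C (S * (I + O * N)) (S * (O * N + I)) :=
  fun y x => unitary_completion K (dilation_out y) (dilation_in x).

Lemma dilation_unitary K : isometry K -> unitary (dilation K).
Proof.
move=> K_iso; apply: unitary_relabel dilation_in_bij dilation_out_bij _.
exact: unitary_completion_unitary.
Qed.

Lemma dilation_ptrace K s i s' s2 i2 s2' :
  \sum_(o : O * N + I)
    proj (dket (dilation K)) ((s, inl i), (s', o)) ((s2, inl i2), (s2', o)) =
  \sum_(o : O) \sum_(n : N) K ((s', o), n) (s, i) * (K ((s2', o), n) (s2, i2))^*.
Proof.
rewrite big_sumType /= [X in _ + X]big1 ?addr0; last by move=> i' _; rewrite /proj mul0r.
by rewrite sum_pair.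
Qed.

End Dilation.

Lemma cptp_dilation (C : numClosedFieldType) (S I O : finType)
    (M : supmap C (S * I) (S * O)) :
  CPTP M -> exists (N : finType) (U : lmap C (S * (I + O * N)) (S * (O * N + I))),
    unitary U /\ forall s i s' s2 i2 s2',
      \sum_o choi M ((s, i), (s', o)) ((s2, i2), (s2', o)) =
      \sum_o proj (dket U) ((s, inl i), (s', o)) ((s2, inl i2), (s2', o)).
Proof.
move=> /choi_kraus[v [choiE K_iso]].
exists 'I_#|{: S * I * (S * O)}|, (dilation (kraus_op v)).
split=> [|s i s' s2 i2 s2']; first exact: dilation_unitary.
by rewrite dilation_ptrace choiE.
Qed.

Section LinkProduct.
Variable C : numClosedFieldType.
Variables (P F AI AO BI BO AI' AO' BI' BO' : finType).

Lemma link_opE (W : op C (P * F * AI * AO * BI * BO))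
    (Mx : op C ((AI * AI') * (AO * AO'))) (My : op C ((BI * BI') * (BO * BO')))
    p ai' bi' f ao' bo' p2 ai2' bi2' f2 ao2' bo2' :
  link_op W Mx My ((p, ai', bi'), (f, ao', bo')) ((p2, ai2', bi2'), (f2, ao2', bo2')) =
  \sum_(s : AI * AO * BI * BO) \sum_(s' : AI * AO * BI * BO)
     W (p, f, s'.1.1.1, s'.1.1.2, s'.1.2, s'.2) (p2, f2, s.1.1.1, s.1.1.2, s.1.2, s.2) *
     (Mx ((s'.1.1.1, ai'), (s'.1.1.2, ao')) ((s.1.1.1, ai2'), (s.1.1.2, ao2')) *
      My ((s'.1.2, bi'), (s'.2, bo')) ((s.1.2, bi2'), (s.2, bo2'))).
Proof.
rewrite /link_op /relabel /ptrace2 /opmul /lcomp /tens /ptransp2 /=.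
apply: eq_bigr => -[[[ai ao] bi] bo] _ /=.
have delta_mid (T : finType) (c : T) a (G : T -> C) :
    \sum_t a * (c == t)%:R * G t = a * G c.
  rewrite -(sum_delta_l c (fun t => a * G t)).
  by apply: eq_bigr => t _; rewrite eq_sym; ring.
have delta_in (T : finType) (c : T) (G H : T -> C) :
    \sum_t G t * ((t == c)%:R * H t) = G c * H c.
  by rewrite -(sum_delta_l c (fun t => G t * H t)); apply: eq_bigr => t _; ring.
rewrite sum_pair /= /idop; under eq_bigr => x _ do rewrite delta_mid /=.
rewrite sum_pair exchange_big /=; apply: eq_bigr => -[[[ai3 ao3] bi3] bo3] _ /=.
exact: delta_in.
Qed.

Definition link_ket (w : ket C (P * F * AI * AO * BI * BO))
    (m : ket C ((AI * AI') * (AO * AO'))) (n : ket C ((BI * BI') * (BO * BO')))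
  : ket C ((P * AI' * BI') * (F * AO' * BO')) :=
  fun u => \sum_(s : AI * AO * BI * BO)
     w (u.1.1.1, u.2.1.1, s.1.1.1, s.1.1.2, s.1.2, s.2) *
     (m ((s.1.1.1, u.1.1.2), (s.1.1.2, u.2.1.2)) * n ((s.1.2, u.1.2), (s.2, u.2.2))).

Lemma link_proj (w : ket C (P * F * AI * AO * BI * BO))
    (m : ket C ((AI * AI') * (AO * AO'))) (n : ket C ((BI * BI') * (BO * BO'))) :
  link_op (proj w) (proj m) (proj n) = proj (link_ket w m n).
Proof.
apply: funext2 => -[[[p ai'] bi'] [[f ao'] bo']]
  [[[p2 ai2'] bi2'] [[f2 ao2'] bo2']].
rewrite link_opE /proj /link_ket /= rmorph_sum big_distrr /=.
apply: eq_bigr => s _; rewrite big_distrl /=; apply: eq_bigr => s' _.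
by rewrite !rmorphM /=; ring.
Qed.

Lemma link_opsuml (K : finType) (W : op C (P * F * AI * AO * BI * BO))
    (X : K -> op C ((AI * AI') * (AO * AO'))) (Y : op C ((BI * BI') * (BO * BO'))) :
  link_op W (opsum X) Y = opsum (fun k => link_op W (X k) Y).
Proof.
apply: funext2 => -[[[p ai'] bi'] [[f ao'] bo']]
  [[[p2 ai2'] bi2'] [[f2 ao2'] bo2']].
rewrite /opsum; under [RHS]eq_bigr => k _ do rewrite link_opE.
rewrite link_opE [RHS]exchange_big; apply: eq_bigr => s _.
rewrite [RHS]exchange_big; apply: eq_bigr => s' _ /=.
by rewrite big_distrl big_distrr /=; apply: eq_bigr => k _; ring.
Qed.

Lemma link_opsumr (K : finType) (W : op C (P * F * AI * AO * BI * BO))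
    (X : op C ((AI * AI') * (AO * AO'))) (Y : K -> op C ((BI * BI') * (BO * BO'))) :
  link_op W X (opsum Y) = opsum (fun k => link_op W X (Y k)).
Proof.
apply: funext2 => -[[[p ai'] bi'] [[f ao'] bo']]
  [[[p2 ai2'] bi2'] [[f2 ao2'] bo2']].
rewrite /opsum; under [RHS]eq_bigr => k _ do rewrite link_opE.
rewrite link_opE [RHS]exchange_big; apply: eq_bigr => s _.
rewrite [RHS]exchange_big; apply: eq_bigr => s' _ /=.
by rewrite big_distrr big_distrr /=; apply: eq_bigr => k _; ring.
Qed.

Lemma link_psd (w : ket C (P * F * AI * AO * BI * BO))
    (X : op C ((AI * AI') * (AO * AO'))) (Y : op C ((BI * BI') * (BO * BO'))) :
  psd X -> psd Y -> psd (link_op (proj w) X Y).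
Proof.
move=> /psd_spectral[m ->] /psd_spectral[n ->].
rewrite link_opsuml; apply: psd_opsum => k.
by rewrite link_opsumr; apply: psd_opsum => l; rewrite link_proj; apply: psd_proj.
Qed.

Lemma link_ptrace (W : op C (P * F * AI * AO * BI * BO))
    (X : op C ((AI * AI') * (AO * AO'))) (Y : op C ((BI * BI') * (BO * BO')))
    p ai' bi' p2 ai2' bi2' :
  \sum_(b : F * AO' * BO') link_op W X Y ((p, ai', bi'), b) ((p2, ai2', bi2'), b) =
  \sum_(s : AI * AO * BI * BO) \sum_(s' : AI * AO * BI * BO)
     (\sum_f W (p, f, s'.1.1.1, s'.1.1.2, s'.1.2, s'.2)
                (p2, f, s.1.1.1, s.1.1.2, s.1.2, s.2)) *
     ((\sum_ao' X ((s'.1.1.1, ai'), (s'.1.1.2, ao')) ((s.1.1.1, ai2'), (s.1.1.2, ao'))) *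
      (\sum_bo' Y ((s'.1.2, bi'), (s'.2, bo')) ((s.1.2, bi2'), (s.2, bo')))).
Proof.
have entryE (b : F * AO' * BO') :
    link_op W X Y ((p, ai', bi'), b) ((p2, ai2', bi2'), b) =
    \sum_(s : AI * AO * BI * BO) \sum_(s' : AI * AO * BI * BO)
      W (p, b.1.1, s'.1.1.1, s'.1.1.2, s'.1.2, s'.2)
        (p2, b.1.1, s.1.1.1, s.1.1.2, s.1.2, s.2) *
      (X ((s'.1.1.1, ai'), (s'.1.1.2, b.1.2)) ((s.1.1.1, ai2'), (s.1.1.2, b.1.2)) *
       Y ((s'.1.2, bi'), (s'.2, b.2)) ((s.1.2, bi2'), (s.2, b.2))).
  by case: b => [[f ao'] bo']; apply: link_opE.
under eq_bigr => b _ do rewrite entryE.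
rewrite exchange_big; apply: eq_bigr => s _ /=.
rewrite exchange_big; apply: eq_bigr => s' _ /=.
rewrite !sum_pair big_distrl; apply: eq_bigr => f _ /=.
rewrite big_distrl big_distrr; apply: eq_bigr => ao' _ /=.
by rewrite !big_distrr.
Qed.

End LinkProduct.

Section UnitaryChannel.
Variable C : numClosedFieldType.
Implicit Types X Y : finType.

Lemma adjK X Y (U : lmap C X Y) : adj (adj U) = U.
Proof. by apply: funext2 => y x; rewrite /adj conjCK. Qed.

Lemma unitary_adj X Y (U : lmap C X Y) : unitary U -> unitary (adj U).
Proof. by case=> UU UU'; split; rewrite adjK. Qed.

Lemma choi_unitary_channel X Y (U : lmap C X Y) :
  choi (unitary_channel U) = proj (dket U).
Proof.
apply: funext2 => -[x y] [x' y'].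
rewrite /choi /unitary_channel /lcomp /munit /adj /proj /dket /=.
rewrite -(sum_delta_l x' (fun z => U y x * (U y' z)^*)); apply: eq_bigr => z _ /=.
transitivity ((\sum_z' (z' == x)%:R * (U y z' * (z == x')%:R)) * (U y' z)^*).
  by congr (_ * _); apply: eq_bigr => z' _; rewrite natr_andb; ring.
by rewrite sum_delta_l; ring.
Qed.

Lemma ptrace_proj_dket X Y (U : lmap C X Y) x x' :
  unitary U -> \sum_y proj (dket U) (x, y) (x', y) = (x == x')%:R.
Proof.
case=> UU _; have := equal_f (equal_f UU x') x.
rewrite /lcomp /adj /idop eq_sym => <-.
by apply: eq_bigr => y _; rewrite /proj /dket mulrC.
Qed.

End UnitaryChannel.

Section Reversal.
Variable C : numClosedFieldType.
Variables (P A B AI' AO' BI' BO' : finType).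

Definition swap_io (s : A * A * B * B) : A * A * B * B := (s.1.1.2, s.1.1.1, s.2, s.1.2).

Lemma swap_ioK : involutive swap_io.
Proof. by case=> [[[ai ao] bi] bo]. Qed.

Lemma link_ket_reverse (w : ket C (P * P * A * A * B * B))
    (U : lmap C (A * AI') (A * AO')) (V : lmap C (B * BI') (B * BO')) a b :
  link_ket (reverse_ket w) (dket U) (dket V) (a, b) =
  (link_ket w (dket (adj U)) (dket (adj V)) (b, a))^*.
Proof.
case: a b => [[p ai'] bi'] [[f ao'] bo'].
rewrite /link_ket /= rmorph_sum (reindex_inj (inv_inj swap_ioK)) /=.
apply: eq_bigr => -[[[ai ao] bi] bo] _ /=.
by rewrite /dket /adj /= !rmorphM /= !conjCK.
Qed.

Lemma link_reverse (w : ket C (P * P * A * A * B * B))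
    (U : lmap C (A * AI') (A * AO')) (V : lmap C (B * BI') (B * BO')) a b a' b' :
  link_op (proj (reverse_ket w)) (proj (dket U)) (proj (dket V)) (a, b) (a', b') =
  link_op (proj w) (proj (dket (adj U))) (proj (dket (adj V))) (b', a') (b, a).
Proof. by rewrite !link_proj /proj !link_ket_reverse conjCK mulrC. Qed.

End Reversal.

Lemma pure_process_reverse (C : numClosedFieldType) (P A B : finType)
    (w : ket C (P * P * A * A * B * B)) :
  pure_process (proj w) -> pure_process (proj (reverse_ket w)).
Proof.
move=> pure_w AI' AO' BI' BO' U V cardA cardB cardP U_unitary V_unitary.
have [Y [Y_unitary YE]] := pure_w AO' AI' BO' BI' (adj U) (adj V)
  (esym cardA) (esym cardB) (esym cardP) (unitary_adj U_unitary) (unitary_adj V_unitary).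
exists (adj Y); split; first exact: unitary_adj.
apply: funext2 => -[a b] [a' b'].
rewrite link_reverse -YE !choi_unitary_channel /proj /dket /adj /= conjCK.
exact: mulrC.
Qed.

Lemma pure_process_is_process (C : numClosedFieldType) (P F A B : finType)
    (w : ket C (P * F * A * A * B * B)) :
  #|P| = #|F| -> pure_process (proj w) -> process_matrix (proj w).
Proof.
move=> cardPF pure_w AI' AO' BI' BO' Mx My cptpMx cptpMy.
have [_ cpMx _] := cptpMx; have [_ cpMy _] := cptpMy.
pose J := link_op (proj w) (choi Mx) (choi My).
exists (choi_map J); rewrite choi_mapK; split=> //; split.
- exact: linear_choi_map.
- exact: cp_choi_map (link_psd _ (choi_psd cpMx) (choi_psd cpMy)).
apply: tp_choi_map => -[[p ai'] bi'] [[p' ai2'] bi2'].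
have [Nx [Ux [Ux_unitary Ux_ptrace]]] := cptp_dilation cptpMx.
have [Ny [Uy [Uy_unitary Uy_ptrace]]] := cptp_dilation cptpMy.
have := pure_w _ _ _ _ Ux Uy; rewrite cardPF !card_sum (addnC #|AI'|) (addnC #|BI'|).
move=> /(_ erefl erefl erefl Ux_unitary Uy_unitary) [Y [Y_unitary YE]].
rewrite link_ptrace.
under eq_bigr => s _ do under eq_bigr => s' _ do rewrite Ux_ptrace Uy_ptrace.
rewrite -(link_ptrace (proj w) (proj (dket Ux)) (proj (dket Uy)) p (inl ai') (inl bi')).
by rewrite -YE choi_unitary_channel ptrace_proj_dket.
Qed.

Theorem mainTheorem10 (P A B : finType) (w : ket CC (P * P * A * A * B * B)) :
  process_matrix (proj w) /\ pure_process (proj w) ->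
  process_matrix (proj (reverse_ket w)) /\ pure_process (proj (reverse_ket w)).
Proof.
case=> _ /pure_process_reverse pure_rw.
by split=> //; apply: pure_process_is_process.
Qed.
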